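(* Let $\div$ be an AGM contraction operator for epistemic states. The following are equivalent: (a) $\div$ satisfies (C8) and (C9), i.e. for all epistemic states $\Psi$ and formulas $\alpha,\beta$: (C8) if $\neg\alpha\models\beta$ then $\mathrm{Bel}(\Psi\div\alpha\div\beta) =_\alpha \mathrm{Bel}(\Psi\div\beta)$; (C9) if $\alpha\models\beta$ then $\mathrm{Bel}(\Psi\div\alpha\div\beta) =_{\neg\beta} \mathrm{Bel}(\Psi\div\beta)$. (b) There is a faithful assignment $\Psi\mapsto\le_\Psi$ such that $[\![\Psi\div\alpha]\!]=[\![\Psi]\!]\cup\min([\![\neg\alpha]\!],\le_\Psi)$ for all $\Psi,\alpha$, and which satisfies for all $\Psi,\alpha$ and worlds $\omega_1,\omega_2$: (CR8) if $\omega_1,\omega_2\in[\![\alpha]\!]$ then $\omega_1\le_\Psi\omega_2 \Leftrightarrow \omega_1\le_{\Psi\div\alpha}\omega_2$; (CR9) if $\omega_1,\omega_2\in[\![\neg\alpha]\!]$ then $\omega_1\le_\Psi\omega_2 \Leftrightarrow \omega_1\le_{\Psi\div\alpha}\omega_2$.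
   Context: $\Sigma$ is a nonempty finite set of propositional variables, $\mathcal{L}$ the propositional language over $\Sigma$, $\Omega$ the set of worlds. $[\![\alpha]\!]$ is the set of models of $\alpha$; for a set $X$ of formulas $[\![X]\!]$ is the set of worlds satisfying all of $X$; $Cn(X)=\{\beta\mid X\models\beta\}$. $\mathcal{E}$ is a set of epistemic states; each $\Psi\in\mathcal{E}$ has a deductively closed belief set $\mathrm{Bel}(\Psi)\subseteq\mathcal{L}$; $\Psi\models\alpha$ iff $\alpha\in\mathrm{Bel}(\Psi)$; $[\![\Psi]\!]=[\![\mathrm{Bel}(\Psi)]\!]$. A belief change operator is a map $\div:\mathcal{E}\times\mathcal{L}\to\mathcal{E}$; $\Psi\div\alpha\div\beta$ means $(\Psi\div\alpha)\div\beta$. An AGM contraction operator for epistemic states is a belief change operator satisfying for all $\Psi,\alpha,\beta$: (C1) $\mathrm{Bel}(\Psi\div\alpha)\subseteq\mathrm{Bel}(\Psi)$; (C2) if $\alpha\notin\mathrm{Bel}(\Psi)$ then $\mathrm{Bel}(\Psi)\subseteq\mathrm{Bel}(\Psi\div\alpha)$; (C3) if $\alpha\not\equiv\top$ then $\alpha\notin\mathrm{Bel}(\Psi\div\alpha)$; (C4) $\mathrm{Bel}(\Psi)\subseteq Cn(\mathrm{Bel}(\Psi\div\alpha)\cup\{\alpha\})$; (C5) if $\alpha\equiv\beta$ then $\mathrm{Bel}(\Psi\div\alpha)=\mathrm{Bel}(\Psi\div\beta)$; (C6) $\mathrm{Bel}(\Psi\div\alpha)\cap\mathrm{Bel}(\Psi\div\beta)\subseteq\mathrm{Bel}(\Psi\div(\alpha\land\beta))$;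 (C7) if $\beta\notin\mathrm{Bel}(\Psi\div(\alpha\land\beta))$ then $\mathrm{Bel}(\Psi\div(\alpha\land\beta))\subseteq\mathrm{Bel}(\Psi\div\beta)$. For a total preorder $\le$ on $\Omega$ and $\Omega'\subseteq\Omega$, $\min(\Omega',\le)=\{\omega\in\Omega'\mid \omega\le\omega' \text{ for all }\omega'\in\Omega'\}$; $<$ is the strict part and $\simeq$ the induced equivalence. A faithful assignment maps each $\Psi$ to a total preorder $\le_\Psi$ on $\Omega$ with (FA1) $\omega_1,\omega_2\in[\![\Psi]\!]\Rightarrow\omega_1\simeq_\Psi\omega_2$ and (FA2) $\omega_1\in[\![\Psi]\!],\omega_2\notin[\![\Psi]\!]\Rightarrow\omega_1<_\Psi\omega_2$. Known fact: $\div$ is an AGM contraction operator for epistemic states iff there is a faithful assignment with $[\![\Psi\div\alpha]\!]=[\![\Psi]\!]\cup\min([\![\neg\alpha]\!],\le_\Psi)$ for all $\Psi,\alpha$. $\alpha$-equivalence: for $\Omega_1,\Omega_2\subseteq\Omega$, $\Omega_1=_\alpha\Omega_2$ iff $\Omega_1\cap[\![\alpha]\!]=\Omega_2\cap[\![\alpha]\!]$; for sets of formulas $X=_\alpha Y$ iff $[\![X]\!]=_\alpha[\![Y]\!]$. *)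

From mathcomp Require Import all_boot.
Set Implicit Arguments. Unset Strict Implicit. Unset Printing Implicit Defensive.

Inductive form (S : Type) : Type :=
  | FVar of S
  | FTop
  | FBot
  | FNeg of form S
  | FAnd of form S & form S
  | FOr of form S & form S
  | FImp of form S & form S.
Arguments FTop {S}. Arguments FBot {S}.

Definition world (S : finType) := {ffun S -> bool}.

Fixpoint sat (S : finType) (w : world S) (a : form S) : bool :=
  match a with
  | FVar x => w x
  | FTop => true
  | FBot => false
  | FNeg b => ~~ sat w b
  | FAnd b c => sat w b && sat w c
  | FOr b c => sat w b || sat w c
  | FImp b c => sat w b ==> sat w c
  end.

Definition wset (S : finType) := world S -> Prop.
Definition fset (S : finType) := form S -> Prop.

Definition set_eq (T : Type) (A B : T -> Prop) := forall x, A x <-> B x.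
Definition subset_of (T : Type) (A B : T -> Prop) := forall x, A x -> B x.
Definition set_cup (T : Type) (A B : T -> Prop) : T -> Prop := fun x => A x \/ B x.
Definition set_cap (T : Type) (A B : T -> Prop) : T -> Prop := fun x => A x /\ B x.

Definition mods (S : finType) (a : form S) : wset S := fun w => sat w a.
Definition modsX (S : finType) (X : fset S) : wset S :=
  fun w => forall b, X b -> sat w b.
Definition Cn (S : finType) (X : fset S) : fset S :=
  fun b => forall w, modsX X w -> sat w b.
Definition fentails (S : finType) (a b : form S) := forall w, sat w a -> sat w b.
Definition fequiv (S : finType) (a b : form S) := forall w, sat w a = sat w b.
Definition tautology (S : finType) (a : form S) := forall w, sat w a.

Definition deductively_closed (S : finType) (E : Type) (Bel : E -> fset S) :=
  forall Psi, subset_of (Cn (Bel Psi)) (Bel Psi).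

Definition AGM_contraction (S : finType) (E : Type) (Bel : E -> fset S)
    (div : E -> form S -> E) : Prop :=
  (forall Psi a, subset_of (Bel (div Psi a)) (Bel Psi)) /\
  (forall Psi a, ~ Bel Psi a -> subset_of (Bel Psi) (Bel (div Psi a))) /\
  (forall Psi a, ~ tautology a -> ~ Bel (div Psi a) a) /\
  (forall Psi a, subset_of (Bel Psi)
      (Cn (fun b => Bel (div Psi a) b \/ b = a))) /\
  (forall Psi a b, fequiv a b -> set_eq (Bel (div Psi a)) (Bel (div Psi b))) /\
  (forall Psi a b, subset_of (set_cap (Bel (div Psi a)) (Bel (div Psi b)))
                             (Bel (div Psi (FAnd a b)))) /\
  (forall Psi a b, ~ Bel (div Psi (FAnd a b)) b ->
      subset_of (Bel (div Psi (FAnd a b))) (Bel (div Psi b))).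

Definition total_preorder (T : Type) (le : T -> T -> Prop) :=
  (forall x y, le x y \/ le y x) /\ (forall x y z, le x y -> le y z -> le x z).

Definition lt_of (T : Type) (le : T -> T -> Prop) x y := le x y /\ ~ le y x.
Definition eqv_of (T : Type) (le : T -> T -> Prop) x y := le x y /\ le y x.

Definition min_le (T : Type) (A : T -> Prop) (le : T -> T -> Prop) : T -> Prop :=
  fun x => A x /\ forall y, A y -> le x y.

Definition faithful_assignment (S : finType) (E : Type) (Bel : E -> fset S)
    (fa : E -> world S -> world S -> Prop) : Prop :=
  (forall Psi, total_preorder (fa Psi)) /\
  (forall Psi w1 w2, modsX (Bel Psi) w1 -> modsX (Bel Psi) w2 ->
       eqv_of (fa Psi) w1 w2) /\
  (forall Psi w1 w2, modsX (Bel Psi) w1 -> ~ modsX (Bel Psi) w2 ->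
       lt_of (fa Psi) w1 w2).

Definition alpha_eq (S : finType) (a : form S) (X Y : fset S) :=
  set_eq (set_cap (modsX X) (mods a)) (set_cap (modsX Y) (mods a)).

Definition C8 (S : finType) (E : Type) (Bel : E -> fset S) (div : E -> form S -> E) :=
  forall Psi a b, fentails (FNeg a) b ->
    alpha_eq a (Bel (div (div Psi a) b)) (Bel (div Psi b)).
Definition C9 (S : finType) (E : Type) (Bel : E -> fset S) (div : E -> form S -> E) :=
  forall Psi a b, fentails a b ->
    alpha_eq (FNeg b) (Bel (div (div Psi a) b)) (Bel (div Psi b)).

Definition CR8 (S : finType) (E : Type) (div : E -> form S -> E)
    (fa : E -> world S -> world S -> Prop) :=
  forall Psi a w1 w2, mods a w1 -> mods a w2 ->
    (fa Psi w1 w2 <-> fa (div Psi a) w1 w2).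
Definition CR9 (S : finType) (E : Type) (div : E -> form S -> E)
    (fa : E -> world S -> world S -> Prop) :=
  forall Psi a w1 w2, mods (FNeg a) w1 -> mods (FNeg a) w2 ->
    (fa Psi w1 w2 <-> fa (div Psi a) w1 w2).

From mathcomp Require Import all_boot.
From Stdlib Require Import Classical.
Set Implicit Arguments. Unset Strict Implicit.

(* (b) => (a): by the representation [[Psi / a]] = [[Psi]] U min([[~a]], <=_Psi), both sides
   of (C8) and (C9) are determined by <=_Psi and <=_(Psi / a) on [[~b]].  Under the
   premise of (C8), [[~b]] is inside [[a]], so (CR8) gives both orders the same minimal
   ~b-worlds, and min([[~a]], <=_Psi) does not meet [[a]]; under that of (C9), [[~b]] is
   inside [[~a]], (CR9) applies, and min([[~a]], <=_Psi) meets [[~b]] only in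
   min([[~b]], <=_Psi).
   (a) => (b): let w1 <=_Psi w2 iff w1 is a model of Psi contracted by a formula false
   exactly at w1 and w2.  By (C1)-(C7), A |-> [[Psi / ~A]] is a choice function with
   core [[Psi]] that is rationalised by this order, which yields faithfulness and the
   representation; (CR8) and (CR9) are then (C8) and (C9) for b that very formula. *)

(* [core] plays the part of [[Psi]] and [sel A] that of [[Psi / ~A]]. *)
Section ChoiceWithCore.
Variable W : eqType.
Variable core : W -> Prop.
Variable sel : pred W -> W -> Prop.

Hypothesis sel_ext : forall (A B : pred W) w, A =1 B -> sel A w -> sel B w.
Hypothesis core_sel : forall (A : pred W) w, core w -> sel A w.
Hypothesis sel_core : forall (A : pred W) w0 w, core w0 -> A w0 -> sel A w -> core w.
Hypothesis sel_nonempty : forall (A : pred W) w, A w -> exists2 u, A u & sel A u.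
Hypothesis sel_out_core : forall (A : pred W) w, sel A w -> ~~ A w -> core w.
Hypothesis sel_predU :
  forall (A B : pred W) w, sel (predU A B) w -> sel A w \/ sel B w.
Hypothesis sel_predU_sub : forall (A B : pred W) u w,
  B u -> sel (predU A B) u -> sel B w -> sel (predU A B) w.

Definition sel_le (a b : W) : Prop := sel (pred2 a b) a.

Lemma sel_subset (A B : pred W) w :
  {subset B <= A} -> B w -> sel A w -> sel B w.
Proof.
move=> sBA Bw selAw.
have defA : A =1 predU [pred x | A x & x != w] B.
  move=> x /=; case: eqP => [-> | _]; first by rewrite Bw orbT; apply: sBA.
  by rewrite andbT; case Bx: (B x); rewrite ?orbT ?orbF //; apply: sBA.
case: (sel_predU (sel_ext defA selAw)) => // /sel_out_core.
by rewrite /= eqxx andbF => /(_ isT) /core_sel.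
Qed.

Lemma sel_le_sel (A : pred W) v w : A v -> sel A v -> A w -> sel_le w v -> sel A w.
Proof.
move=> Av selAv Aw le_wv.
have defA : predU A (pred2 w v) =1 A.
  by move=> x /=; case Ax: (A x) => //=; apply/norP; split; apply: contraFN Ax => /eqP ->.
apply: (sel_ext defA); apply: (sel_predU_sub (u := v)) le_wv.
- by rewrite /= eqxx orbT.
- by apply: (sel_ext (fsym defA)).
Qed.

Lemma sel_minP (A : pred W) w : A w -> sel A w <-> (forall v, A v -> sel_le w v).
Proof.
move=> Aw; split=> [selAw v Av | min_w].
  by apply: (sel_subset (A := A)) => [x /pred2P [] -> | |] //=; rewrite eqxx.
by have [u Au selAu] := sel_nonempty Aw; apply: (sel_le_sel Au selAu Aw (min_w u Au)).
Qed.

Lemma selE (A : pred W) w : sel A w <-> core w \/ min_le A sel_le w.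
Proof.
split=> [selAw | [/core_sel // | [Aw /(sel_minP Aw) //]]].
case Aw: (A w); last by left; apply: (sel_out_core selAw); rewrite Aw.
by right; split=> //; apply/(sel_minP Aw).
Qed.

Lemma sel_le_total a b : sel_le a b \/ sel_le b a.
Proof.
have [|u /pred2P [] -> sel_u] := @sel_nonempty (pred2 a b) a; first by rewrite /= eqxx.
  by left.
by right; apply: sel_ext sel_u => x /=; rewrite orbC.
Qed.

Lemma sel_le_trans a b c : sel_le a b -> sel_le b c -> sel_le a c.
Proof.
move=> le_ab le_bc; pose A : pred W := [pred x | [|| x == a, x == b | x == c]].
have [Aa Ab Ac] : [/\ A a, A b & A c] by split; rewrite /A /= eqxx ?orbT.
have selAa : sel A a.
  have [u /or3P [] /eqP -> selAu] := sel_nonempty Aa => //.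
    exact: sel_le_sel Ab selAu Aa le_ab.
  exact: sel_le_sel Ab (sel_le_sel Ac selAu Ab le_bc) Aa le_ab.
by apply: (sel_subset (A := A)) selAa => [x /pred2P [] -> |] //; rewrite /= eqxx.
Qed.

Lemma sel_le_core a b : core a -> ~ core b -> lt_of sel_le a b.
Proof.
move=> core_a ncore_b; split; first exact: core_sel.
by move=> /(sel_core core_a) core_b; apply/ncore_b/core_b; rewrite /= eqxx orbT.
Qed.

End ChoiceWithCore.

Section CharacteristicFormulas.
Variable S : finType.

Definition literal (w : world S) (x : S) : form S :=
  if w x then FVar x else FNeg (FVar x).

Definition world_form (w : world S) : form S :=
  foldr (fun x f => FAnd (literal w x) f) FTop (enum S).

Definition pred_form (P : pred (world S)) : form S :=
  foldr (fun w f => FOr (world_form w) f) FBot (enum P).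

Lemma sat_world_form v w : sat v (world_form w) = (v == w).
Proof.
have -> : sat v (world_form w) = all (fun x => v x == w x) (enum S).
  rewrite /world_form; elim: (enum S) => //= x s ->.
  by rewrite /literal; case: (w x) => /=; case: (v x).
apply/allP/eqP => [v_w | -> //].
by apply/ffunP => x; apply/eqP/v_w; rewrite mem_enum.
Qed.

Lemma sat_pred_form v P : sat v (pred_form P) = P v.
Proof.
rewrite /pred_form -[P v]/(v \in P) -mem_enum.
by elim: (enum P) => //= w s ->; rewrite sat_world_form in_cons.
Qed.

Lemma pred_form_predCU (A B : pred (world S)) :
  fequiv (FAnd (pred_form (predC A)) (pred_form (predC B))) (pred_form (predC (predU A B))).
Proof. by move=> v; rewrite /= !sat_pred_form /= negb_or. Qed.

End CharacteristicFormulas.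

Section ContractionOrder.
Variables (S : finType) (E : Type) (Bel : E -> form S -> Prop).
Hypothesis Bel_closed : deductively_closed Bel.
Variable div : E -> form S -> E.
Hypothesis div_AGM : AGM_contraction Bel div.

Lemma contr_inclusion Psi a : subset_of (Bel (div Psi a)) (Bel Psi).
Proof. by case: div_AGM. Qed.

Lemma contr_vacuity Psi a : ~ Bel Psi a -> subset_of (Bel Psi) (Bel (div Psi a)).
Proof. by case: div_AGM => _ [C2 _]; apply: C2. Qed.

Lemma contr_success Psi a : ~ tautology a -> ~ Bel (div Psi a) a.
Proof. by case: div_AGM => _ [_ [C3 _]]; apply: C3. Qed.

Lemma contr_recovery Psi a :
  subset_of (Bel Psi) (Cn (fun b => Bel (div Psi a) b \/ b = a)).
Proof. by case: div_AGM => _ [_ [_ [C4 _]]]; apply: C4. Qed.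

Lemma contr_extensionality Psi a b :
  fequiv a b -> set_eq (Bel (div Psi a)) (Bel (div Psi b)).
Proof. by case: div_AGM => _ [_ [_ [_ [C5 _]]]]; apply: C5. Qed.

Lemma contr_conj_overlap Psi a b :
  subset_of (set_cap (Bel (div Psi a)) (Bel (div Psi b))) (Bel (div Psi (FAnd a b))).
Proof. by case: div_AGM => _ [_ [_ [_ [_ [C6 _]]]]]; apply: C6. Qed.

Lemma contr_conj_inclusion Psi a b : ~ Bel (div Psi (FAnd a b)) b ->
  subset_of (Bel (div Psi (FAnd a b))) (Bel (div Psi b)).
Proof. by case: div_AGM => _ [_ [_ [_ [_ [_ C7]]]]]; apply: C7. Qed.

Lemma nbel_countermodel Psi b :
  ~ Bel Psi b -> exists2 w, modsX (Bel Psi) w & ~~ sat w b.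
Proof.
move=> nBb; apply: NNPP => no_w; apply/nBb/Bel_closed => w Psi_w.
by apply: NNPP => /negP nb; apply: no_w; exists w.
Qed.

Lemma mods_contr_equiv Psi a b w :
  fequiv a b -> modsX (Bel (div Psi a)) w -> modsX (Bel (div Psi b)) w.
Proof. by move=> ab w_a c /(contr_extensionality Psi ab c) /w_a. Qed.

Definition contr_sel Psi (A : pred (world S)) : world S -> Prop :=
  modsX (Bel (div Psi (pred_form (predC A)))).

Definition contr_le Psi : world S -> world S -> Prop := sel_le (contr_sel Psi).

Lemma contr_sel_ext Psi (A B : pred (world S)) w :
  A =1 B -> contr_sel Psi A w -> contr_sel Psi B w.
Proof. by move=> eqAB; apply: mods_contr_equiv => v; rewrite !sat_pred_form /= eqAB. Qed.

Lemma core_contr_sel Psi (A : pred (world S)) w :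
  modsX (Bel Psi) w -> contr_sel Psi A w.
Proof. by move=> Psi_w b /contr_inclusion /Psi_w. Qed.

Lemma contr_sel_core Psi (A : pred (world S)) w0 w :
  modsX (Bel Psi) w0 -> A w0 -> contr_sel Psi A w -> modsX (Bel Psi) w.
Proof.
move=> Psi_w0 Aw0 sel_w b /(contr_vacuity (a := pred_form (predC A))) Bb; apply/sel_w/Bb.
by move=> /Psi_w0; rewrite sat_pred_form /= Aw0.
Qed.

Lemma contr_sel_nonempty Psi (A : pred (world S)) w :
  A w -> exists2 u, A u & contr_sel Psi A u.
Proof.
move=> Aw; have nt : ~ tautology (pred_form (predC A)).
  by move=> /(_ w); rewrite sat_pred_form /= Aw.
have [u sel_u] := nbel_countermodel (contr_success (Psi := Psi) nt).
by rewrite sat_pred_form /= negbK; exists u.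
Qed.

Lemma contr_sel_out_core Psi (A : pred (world S)) w :
  contr_sel Psi A w -> ~~ A w -> modsX (Bel Psi) w.
Proof.
move=> sel_w nAw b /(contr_recovery (a := pred_form (predC A))); apply=> c [/sel_w // | ->].
by rewrite sat_pred_form.
Qed.

Lemma contr_sel_predU Psi (A B : pred (world S)) w :
  contr_sel Psi (predU A B) w -> contr_sel Psi A w \/ contr_sel Psi B w.
Proof.
rewrite /contr_sel /modsX => selU.
case: (classic (forall b, Bel (div Psi (pred_form (predC A))) b -> sat w b)) => [|nA];
  first by left.
have [b1 /(imply_to_and (Bel _ b1)) [b1A nb1]] := not_all_ex_not _ _ nA.
right=> b2 b2B.
have : Bel (div Psi (FAnd (pred_form (predC A)) (pred_form (predC B)))) (FOr b1 b2).
  apply: contr_conj_overlap; split; apply: Bel_closed => v sel_v /=.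
    by rewrite (sel_v _ b1A).
  by rewrite (sel_v _ b2B) orbT.
by move=> /(contr_extensionality _ (pred_form_predCU A B)) /selU /orP [/nb1|].
Qed.

Lemma contr_sel_predU_sub Psi (A B : pred (world S)) u w :
  B u -> contr_sel Psi (predU A B) u -> contr_sel Psi B w ->
  contr_sel Psi (predU A B) w.
Proof.
move=> Bu selU_u selB_w; apply: (mods_contr_equiv (pred_form_predCU A B)).
have nBel : ~ Bel (div Psi (FAnd (pred_form (predC A)) (pred_form (predC B))))
                 (pred_form (predC B)).
  move=> /(contr_extensionality _ (pred_form_predCU A B)) /selU_u.
  by rewrite sat_pred_form /= Bu.
by move=> c /(contr_conj_inclusion nBel) /selB_w.
Qed.

Lemma mods_contr_sel Psi a w :
  modsX (Bel (div Psi a)) w <-> contr_sel Psi [pred v | ~~ sat v a] w.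
Proof.
have eqv : fequiv a (pred_form (predC [pred v | ~~ sat v a])).
  by move=> v; rewrite sat_pred_form /= negbK.
by split; apply: mods_contr_equiv => // v; rewrite eqv.
Qed.

Lemma contr_le_faithful : faithful_assignment Bel contr_le.
Proof.
split; [move=> Psi; split | split].
- exact: sel_le_total (@contr_sel_ext Psi) (@contr_sel_nonempty Psi).
- exact: sel_le_trans (@contr_sel_ext Psi) (@core_contr_sel Psi) (@contr_sel_nonempty Psi)
    (@contr_sel_out_core Psi) (@contr_sel_predU Psi) (@contr_sel_predU_sub Psi).
- by move=> Psi w1 w2 Psi_w1 Psi_w2; split; apply: core_contr_sel.
- move=> Psi; exact: sel_le_core (@core_contr_sel Psi) (@contr_sel_core Psi).
Qed.

Lemma mods_contr Psi a : set_eq (modsX (Bel (div Psi a)))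
  (set_cup (modsX (Bel Psi)) (min_le (mods (FNeg a)) (contr_le Psi))).
Proof.
move=> w; apply: iff_trans (mods_contr_sel Psi a w) _.
exact: selE (@contr_sel_ext Psi) (@core_contr_sel Psi) (@contr_sel_nonempty Psi)
  (@contr_sel_out_core Psi) (@contr_sel_predU Psi) (@contr_sel_predU_sub Psi)
  [pred v | ~~ sat v a] w.
Qed.

Lemma contr_le_eq_on Psi Psi' c w1 w2 :
  alpha_eq c (Bel (div Psi' (pred_form (predC (pred2 w1 w2)))))
             (Bel (div Psi (pred_form (predC (pred2 w1 w2))))) ->
  sat w1 c -> contr_le Psi w1 w2 <-> contr_le Psi' w1 w2.
Proof.
move=> eq_c c_w1; split=> le12.
  by case: ((eq_c w1).2 (conj le12 c_w1)).
by case: ((eq_c w1).1 (conj le12 c_w1)).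
Qed.

Lemma C8_CR8 : C8 Bel div -> CR8 div contr_le.
Proof.
move=> C8_div Psi a w1 w2 a_w1 a_w2; apply: contr_le_eq_on (C8_div _ _ _ _) (a_w1) => v /= nav.
by rewrite sat_pred_form /=; apply/norP; split; apply: contraNneq nav => ->.
Qed.

Lemma C9_CR9 : C9 Bel div -> CR9 div contr_le.
Proof.
move=> C9_div Psi a w1 w2 na_w1 na_w2; apply: contr_le_eq_on (C9_div _ _ _ _) _ => [v av |].
  by rewrite sat_pred_form /=; apply/norP; split; apply: contraTneq av => ->.
by rewrite /= sat_pred_form /= eqxx.
Qed.

End ContractionOrder.

Lemma min_le_eq_on (T : Type) (A X : T -> Prop) (le1 le2 : T -> T -> Prop) :
  subset_of A X -> (forall x y, X x -> X y -> le1 x y <-> le2 x y) ->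
  set_eq (min_le A le1) (min_le A le2).
Proof.
move=> sAX eq_le x; split=> -[Ax min_x]; split=> // y Ay.
  by apply/(eq_le x y (sAX x Ax) (sAX y Ay))/min_x.
by apply/(eq_le x y (sAX x Ax) (sAX y Ay))/min_x.
Qed.

Lemma min_le_subset (T : Type) (A B : T -> Prop) (le : T -> T -> Prop) x :
  subset_of A B -> A x -> min_le B le x -> min_le A le x.
Proof. by move=> sAB Ax [_ min_x]; split=> // y /sAB /min_x. Qed.

Section RepresentedContraction.
Variables (S : finType) (E : Type) (Bel : E -> form S -> Prop) (div : E -> form S -> E).
Variable fa : E -> world S -> world S -> Prop.
Hypothesis fa_repr : forall Psi a, set_eq (modsX (Bel (div Psi a)))
  (set_cup (modsX (Bel Psi)) (min_le (mods (FNeg a)) (fa Psi))).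

Lemma mods_contr_contr_on Psi a b (D : world S -> Prop) :
  (forall w, D w -> min_le (mods (FNeg a)) (fa Psi) w ->
     modsX (Bel Psi) w \/ min_le (mods (FNeg b)) (fa Psi) w) ->
  set_eq (min_le (mods (FNeg b)) (fa (div Psi a))) (min_le (mods (FNeg b)) (fa Psi)) ->
  set_eq (set_cap (modsX (Bel (div (div Psi a) b))) D) (set_cap (modsX (Bel (div Psi b))) D).
Proof.
move=> min_a_D eq_min w; split=> -[w_ab Dw]; split=> //; apply/fa_repr.
  case/fa_repr: w_ab => [/fa_repr [Psi_w | /(min_a_D w Dw) //] | /eq_min]; by [left | right].
case/fa_repr: w_ab => [Psi_w | /eq_min min_w]; last by right.
by left; apply/fa_repr; left.
Qed.

Lemma CR8_C8 : CR8 div fa -> C8 Bel div.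
Proof.
move=> CR8_fa Psi a b nab; have sba : subset_of (mods (FNeg b)) (mods a).
  by move=> v /=; apply: contraNT => /nab.
apply: mods_contr_contr_on => [w a_w [/= na_w _] | ].
  by rewrite /mods /= a_w in na_w.
apply: min_le_eq_on sba _ => x y a_x a_y; exact: iff_sym (CR8_fa _ _ _ _ a_x a_y).
Qed.

Lemma CR9_C9 : CR9 div fa -> C9 Bel div.
Proof.
move=> CR9_fa Psi a b ab; have sba : subset_of (mods (FNeg b)) (mods (FNeg a)).
  by move=> v /=; apply: contraNN => /ab.
apply: mods_contr_contr_on => [w nb_w min_w | ].
  by right; apply: min_le_subset sba nb_w min_w.
apply: min_le_eq_on sba _ => x y na_x na_y; exact: iff_sym (CR9_fa _ _ _ _ na_x na_y).
Qed.

End RepresentedContraction.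

Theorem mainTheorem4 (S : finType) (HS : 0 < #|S|) (E : Type)
    (Bel : E -> form S -> Prop) (Hcl : deductively_closed Bel)
    (div : E -> form S -> E) (Hagm : AGM_contraction Bel div) :
  (C8 Bel div /\ C9 Bel div) <->
  (exists fa : E -> world S -> world S -> Prop,
     faithful_assignment Bel fa /\
     (forall Psi a, set_eq (modsX (Bel (div Psi a)))
                           (set_cup (modsX (Bel Psi)) (min_le (mods (FNeg a)) (fa Psi)))) /\
     CR8 div fa /\ CR9 div fa).
Proof.
split=> [[C8_div C9_div] | [fa [_ [fa_repr [CR8_fa CR9_fa]]]]].
  exists (contr_le Bel div); split; first exact: contr_le_faithful.
  split; first exact: mods_contr.
  by split; [exact: C8_CR8 | exact: C9_CR9].
by split; [exact: CR8_C8 fa_repr CR8_fa | exact: CR9_C9 fa_repr CR9_fa].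
Qed.
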